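(* Let $n\geq2$, $\sigma>0$ and $x_0\in(0,\infty)$, and let $u$ be the solution of the initial value problem $$u''=\Big[\frac{x}{2}u'+\frac{n-1}{u}-\frac{u}{2}\Big]\big(1+(u')^2\big),\qquad u(x_0)=\sigma x_0,\qquad u'(x_0)\geq\sigma,$$ maximally extended to the right on an interval $(x_0,x_\infty)$ (with $u>0$). Then $x_\infty<\infty$, and if $u(x_0)\geq\sqrt{2(n-1)}$, then $x_\infty\leq\big(1+\frac{1}{n-1}\big)x_0$. *)

From Stdlib Require Import Reals.
From Coquelicot Require Import Coquelicot.
Open Scope R_scope.

Definition ode_rhs (n : nat) (x u du : R) : R :=
  (x / 2 * du + (INR n - 1) / u - u / 2) * (1 + du ^ 2).

Definition is_sol (n : nat) (sigma x0 : R) (X : Rbar) (u : R -> R) : Prop :=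
  Rbar_lt x0 X /\
  u x0 = sigma * x0 /\
  Derive u x0 >= sigma /\
  (forall x, x0 <= x -> Rbar_lt x X ->
     ex_derive u x /\ ex_derive (Derive u) x /\ 0 < u x /\
     Derive (Derive u) x = ode_rhs n x (u x) (Derive u x)).

Definition is_max_sol (n : nat) (sigma x0 : R) (X : Rbar) (u : R -> R) : Prop :=
  is_sol n sigma x0 X u /\
  forall (Y : Rbar) (v : R -> R), Rbar_lt X Y -> is_sol n sigma x0 Y v ->
    ~ (forall x, x0 <= x -> Rbar_lt x X -> v x = u x).

From Stdlib Require Import Reals Lra Psatz.
From Coquelicot Require Import Coquelicot.
Open Scope R_scope.

(* With N = n - 1: the quantity x u' - u is nonnegative at x0, and it cannot
   become negative because its derivative x u'' is positive wherever it is
   nonnegative.  Hence u' >= u / x > 0, u'' > 0 and u' >= sigma, so u reaches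
   sqrt (2 N).  From any point a where u(a) >= sqrt (2 N), the ratio
   v = u / u' satisfies 0 < v <= a and v v' <= v - N x, so the energy
   v^2 - 2 a x + N x^2 does not increase; at x = (1 + 1/N) a it would be at
   most a^2 (1/N - 1) <= 0 < v^2, so the solution dies before that point. *)

Lemma le_of_derive_nonneg (g dg : R -> R) (a b : R) : a <= b ->
  (forall x, a <= x <= b -> is_derive g x (dg x)) ->
  (forall x, a <= x <= b -> 0 <= dg x) -> g a <= g b.
Proof.
  intros Hab Hd Hpos.
  destruct (MVT_gen g a b dg) as [c [Hc Hmvt]];
    rewrite ?Rmin_left, ?Rmax_right in * by lra.
  - intros x Hx; apply Hd; lra.
  - intros x Hx. apply continuity_pt_filterlim, (ex_derive_continuous g).
    exists (dg x); apply Hd; lra.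
  - specialize (Hpos c Hc). nra.
Qed.

Lemma ge_of_derive_nonpos (g dg : R -> R) (a b : R) : a <= b ->
  (forall x, a <= x <= b -> is_derive g x (dg x)) ->
  (forall x, a <= x <= b -> dg x <= 0) -> g b <= g a.
Proof.
  intros Hab Hd Hneg.
  enough (- g a <= - g b) by lra.
  apply (le_of_derive_nonneg (fun x => - g x) (fun x => - dg x)); [lra| |].
  - intros x Hx; apply (is_derive_opp g x (dg x)), Hd, Hx.
  - intros x Hx; specialize (Hneg x Hx); lra.
Qed.

Lemma is_derive_pos_right (f : R -> R) (c l : R) : is_derive f c l -> 0 < l ->
  exists d : posreal, forall t, c < t < c + d -> f c < f t.
Proof.
  intros Hd Hl.
  destruct (proj1 (is_derive_Reals f c l) Hd l Hl) as [d Hq].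
  exists d; intros t Ht.
  specialize (Hq (t - c)); replace (c + (t - c)) with t in Hq by ring.
  destruct (Rabs_def2 _ _ (Hq ltac:(lra) ltac:(rewrite Rabs_pos_eq; lra))) as [_ Hlo].
  assert (0 < (f t - f c) / (t - c)) as Hquot by lra.
  apply Rdiv_pos_cases in Hquot; lra.
Qed.

Lemma nonneg_forward_invariant (f df : R -> R) (a b : R) : a <= b -> 0 <= f a ->
  (forall t, a <= t <= b -> is_derive f t (df t)) ->
  (forall t, a <= t <= b -> 0 <= f t -> 0 < df t) -> 0 <= f b.
Proof.
  intros Hab Hfa Hd Hpos.
  destruct (Rle_or_lt 0 (f b)) as [|Hfb]; [assumption | exfalso].
  set (E t := a <= t <= b /\ 0 <= f t).
  destruct (completeness E) as [c [Hub Hlub]].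
  - exists b; intros t [Ht _]; lra.
  - exists a; split; [lra | assumption].
  assert (Hac : a <= c) by (apply Hub; split; [lra | assumption]).
  assert (Hcb : c <= b) by (apply Hlub; intros t [Ht _]; lra).
  (* The supremum c of E lies in E, and f increases strictly just after c. *)
  assert (Hfc : 0 <= f c).
  { destruct (Rle_or_lt 0 (f c)) as [|Hneg]; [assumption | exfalso].
    assert (Hcont : continuous f c)
      by (apply (ex_derive_continuous f); exists (df c); apply Hd; lra).
    destruct (Hcont (fun z => z < 0) (open_lt 0 _ Hneg)) as [d Hnear].
    enough (c <= c - d / 2) by (destruct d; simpl in *; lra).
    apply Hlub; intros t [Ht Hft].
    destruct (Rle_or_lt t (c - d / 2)) as [|Hgt]; [assumption | exfalso].
    assert (t <= c) by (apply Hub; split; assumption).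
    enough (f t < 0) by lra.
    apply Hnear. change (Rabs (t - c) < d). rewrite Rabs_left1; lra. }
  assert (Hcb' : c < b) by (destruct (Req_dec c b) as [->|]; lra).
  destruct (is_derive_pos_right f c (df c) (Hd c ltac:(lra)) (Hpos c ltac:(lra) Hfc))
    as [d Hincr].
  set (t := c + Rmin d (b - c) / 2).
  assert (Hmin : 0 < Rmin d (b - c) <= b - c /\ Rmin d (b - c) <= d)
    by (split; [split; [apply Rmin_pos; [apply cond_pos | lra] | apply Rmin_r] | apply Rmin_l]).
  assert (t <= c) by (apply Hub; split; [unfold t; lra |];
                      apply Rlt_le, Rle_lt_trans with (f c); [| apply Hincr; unfold t]; lra).
  unfold t in *; lra.
Qed.

Section Solution.

Variables (n : nat) (sigma x0 : R) (X : Rbar) (u : R -> R).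
Hypotheses (Hn : (2 <= n)%nat) (Hsigma : 0 < sigma) (Hx0 : 0 < x0)
  (Hsol : is_sol n sigma x0 X u).

Local Notation N := (INR n - 1).
Local Notation p := (Derive u).
Local Notation q := (Derive (Derive u)).
Local Notation dom t := (x0 <= t /\ Rbar_lt (Finite t) X).

Lemma N_ge_1 : 1 <= N.
Proof. apply le_INR in Hn; simpl in Hn; lra. Qed.

Lemma dom_le (s t : R) : dom s -> x0 <= t <= s -> dom t.
Proof.
  intros [Hs HsX] Ht; split; [lra |].
  apply Rbar_le_lt_trans with s; [simpl; lra | exact HsX].
Qed.

Lemma dom_x0 : dom x0.
Proof. split; [lra | apply Hsol]. Qed.

Lemma sol_at (t : R) : dom t ->
  ex_derive u t /\ ex_derive p t /\ 0 < u t /\ q t = ode_rhs n t (u t) (p t).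
Proof. intros [Ht HtX]; apply (proj2 (proj2 (proj2 Hsol)) t Ht HtX). Qed.

Lemma sol_pos (t : R) : dom t -> 0 < u t.
Proof. intros Dt; apply (sol_at t Dt). Qed.

Lemma sol_is_derive (t : R) : dom t -> is_derive u t (p t).
Proof. intros Dt; apply Derive_correct, (sol_at t Dt). Qed.

Lemma sol_is_derive2 (t : R) : dom t -> is_derive p t (q t).
Proof. intros Dt; apply Derive_correct, (sol_at t Dt). Qed.

Lemma sol_ode (t : R) : dom t ->
  q t = ((t * p t - u t) / 2 + N / u t) * (1 + p t ^ 2).
Proof.
  intros Dt; destruct (sol_at t Dt) as [_ [_ [Hu ->]]].
  unfold ode_rhs; field; lra.
Qed.

Lemma ode_factor_pos (t : R) : dom t -> 0 <= t * p t - u t ->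
  0 < ((t * p t - u t) / 2 + N / u t) * (1 + p t ^ 2).
Proof.
  intros Dt Hf.
  pose proof N_ge_1; pose proof (sol_pos t Dt); pose proof (pow2_ge_0 (p t)).
  assert (0 < N / u t) by (apply Rdiv_lt_0_compat; lra).
  apply Rmult_lt_0_compat; lra.
Qed.

Lemma sol_slope_ge (t : R) : dom t -> 0 <= t * p t - u t.
Proof.
  intros Dt.
  apply (nonneg_forward_invariant (fun s => s * p s - u s) (fun s => s * q s) x0 t).
  - apply Dt.
  - destruct Hsol as [_ [-> [Hp0 _]]]; nra.
  - intros s Hs; pose proof (sol_at s (dom_le t s Dt Hs)) as [Hu [Hp _]].
    auto_derive; [tauto |].
    change (fun y => u y) with u; change (fun y => p y) with p; ring.
  - intros s Hs Hf; pose proof (dom_le t s Dt Hs) as Ds.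
    rewrite (sol_ode s Ds); apply Rmult_lt_0_compat; [lra | exact (ode_factor_pos s Ds Hf)].
Qed.

Lemma sol_deriv_pos (t : R) : dom t -> 0 < p t.
Proof.
  intros Dt; pose proof (sol_slope_ge t Dt); pose proof (sol_pos t Dt).
  destruct Dt; nra.
Qed.

Lemma sol_deriv2_pos (t : R) : dom t -> 0 < q t.
Proof. intros Dt; rewrite (sol_ode t Dt); exact (ode_factor_pos t Dt (sol_slope_ge t Dt)). Qed.

Lemma sol_deriv_ge (t : R) : dom t -> sigma <= p t.
Proof.
  intros Dt; destruct Hsol as [_ [_ [Hp0 _]]].
  enough (p x0 <= p t) by lra.
  apply (le_of_derive_nonneg p q); [apply Dt | |].
  - intros s Hs; exact (sol_is_derive2 s (dom_le t s Dt Hs)).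
  - intros s Hs; exact (Rlt_le _ _ (sol_deriv2_pos s (dom_le t s Dt Hs))).
Qed.

Lemma sol_ge_linear (t : R) : dom t -> u x0 + sigma * (t - x0) <= u t.
Proof.
  intros Dt.
  enough (u x0 - sigma * x0 <= u t - sigma * t) by lra.
  apply (le_of_derive_nonneg (fun s => u s - sigma * s) (fun s => p s - sigma));
    [apply Dt | |].
  - intros s Hs; pose proof (sol_is_derive s (dom_le t s Dt Hs)).
    auto_derive; [exists (p s); assumption |].
    change (fun y => u y) with u; ring.
  - intros s Hs; pose proof (sol_deriv_ge s (dom_le t s Dt Hs)); lra.
Qed.

Lemma sol_le (s t : R) : dom t -> x0 <= s <= t -> u s <= u t.
Proof.
  intros Dt Hs; apply (le_of_derive_nonneg u p); [lra | |].
  - intros r Hr; apply sol_is_derive, (dom_le t r Dt); lra.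
  - intros r Hr; apply Rlt_le, sol_deriv_pos, (dom_le t r Dt); lra.
Qed.

Lemma ratio_is_derive (t : R) : dom t ->
  is_derive (fun s => u s / p s) t (1 - u t * q t / p t ^ 2).
Proof.
  intros Dt; pose proof (sol_at t Dt) as [Hu [Hp _]]; pose proof (sol_deriv_pos t Dt).
  auto_derive; [repeat split; auto; lra |].
  change (fun y => u y) with u; change (fun y => p y) with p; field; lra.
Qed.

Lemma ratio_derive_nonpos (t : R) : dom t -> 1 - u t * q t / p t ^ 2 <= 0.
Proof.
  intros Dt; rewrite (sol_ode t Dt).
  pose proof N_ge_1; pose proof (sol_pos t Dt); pose proof (sol_deriv_pos t Dt).
  pose proof (sol_slope_ge t Dt); pose proof (pow2_ge_0 (p t)).
  enough (1 <= u t * (((t * p t - u t) / 2 + N / u t) * (1 + p t ^ 2)) / p t ^ 2) by lra.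
  apply Rle_div_r; [nra |].
  replace (u t * (((t * p t - u t) / 2 + N / u t) * (1 + p t ^ 2)))
    with ((u t * (t * p t - u t) / 2 + N) * (1 + p t ^ 2)) by (field; lra).
  assert (0 <= u t * (t * p t - u t)) by (apply Rmult_le_pos; lra).
  nra.
Qed.

Lemma ratio_le (t : R) : dom t -> u t / p t <= t.
Proof.
  intros Dt; pose proof (sol_slope_ge t Dt); pose proof (sol_deriv_pos t Dt).
  apply Rle_div_l; lra.
Qed.

Lemma ratio_nonincreasing (s t : R) : dom t -> x0 <= s <= t -> u t / p t <= u s / p s.
Proof.
  intros Dt Hs.
  apply (ge_of_derive_nonpos (fun r => u r / p r) (fun r => 1 - u r * q r / p r ^ 2));
    [lra | |]; intros r Hr.
  - apply ratio_is_derive, (dom_le t r Dt); lra.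
  - apply ratio_derive_nonpos, (dom_le t r Dt); lra.
Qed.

(* With v = u / u', one has v v' = v - u^2 u'' / u'^3, and the ODE gives
   u^2 u'' = (N x u' + (x u' - u) (u^2 / 2 - N)) (1 + u'^2). *)
Lemma ratio_mul_derive_le (t : R) : dom t -> 2 * N <= u t ^ 2 ->
  u t / p t * (1 - u t * q t / p t ^ 2) <= u t / p t - N * t.
Proof.
  intros Dt Hu2; rewrite (sol_ode t Dt).
  pose proof N_ge_1; pose proof (sol_pos t Dt); pose proof (sol_deriv_pos t Dt).
  pose proof (sol_slope_ge t Dt); pose proof (pow2_ge_0 (p t)).
  set (f := t * p t - u t) in *.
  assert (Hp3 : 0 < p t ^ 3) by (apply pow_lt; lra).
  assert (Hcube : N * t * p t ^ 3
                  <= (N * t * p t + f * (u t ^ 2 / 2 - N)) * (1 + p t ^ 2)).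
  { assert (0 <= f * (u t ^ 2 / 2 - N) * (1 + p t ^ 2))
      by (apply Rmult_le_pos; [apply Rmult_le_pos |]; lra).
    assert (0 <= N * t * p t) by (destruct Dt; apply Rmult_le_pos; [apply Rmult_le_pos |]; lra).
    nra. }
  replace (u t / p t * (1 - u t * ((f / 2 + N / u t) * (1 + p t ^ 2)) / p t ^ 2))
    with (u t / p t - (N * t * p t + f * (u t ^ 2 / 2 - N)) * (1 + p t ^ 2) / p t ^ 3)
    by (unfold f; field; lra).
  enough (N * t <= (N * t * p t + f * (u t ^ 2 / 2 - N)) * (1 + p t ^ 2) / p t ^ 3)
    by lra.
  apply (Rle_div_r _ _ _ Hp3), Hcube.
Qed.

(* The derivative 2 v v' - 2 a + 2 N x is at most 2 (v - a) <= 0, as v <= v(a) <= a. *)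
Lemma energy_nonincreasing (a b : R) : dom b -> x0 <= a <= b -> 2 * N <= u a ^ 2 ->
  (u b / p b) ^ 2 - 2 * a * b + N * b ^ 2 <= (u a / p a) ^ 2 - 2 * a * a + N * a ^ 2.
Proof.
  intros Db Hab Hua.
  apply (ge_of_derive_nonpos (fun t => (u t / p t) ^ 2 - 2 * a * t + N * t ^ 2)
           (fun t => 2 * (u t / p t) * (1 - u t * q t / p t ^ 2) - 2 * a + 2 * N * t));
    [lra | |]; intros t Ht; pose proof (dom_le b t Db ltac:(lra)) as Dt.
  - pose proof (sol_at t Dt) as [Hu [Hp _]]; pose proof (sol_deriv_pos t Dt).
    auto_derive; [repeat split; auto; lra |].
    change (fun y => u y) with u; change (fun y => p y) with p; field; lra.
  - assert (Hut : 2 * N <= u t ^ 2).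
    { pose proof (sol_le a t Dt ltac:(lra)); pose proof (sol_pos a (dom_le b a Db ltac:(lra))).
      nra. }
    pose proof (ratio_mul_derive_le t Dt Hut).
    pose proof (ratio_nonincreasing a t Dt ltac:(lra)).
    pose proof (ratio_le a (dom_le b a Db ltac:(lra))).
    lra.
Qed.

Lemma dom_bounded (a : R) : dom a -> sqrt (2 * N) <= u a ->
  Rbar_le X (Finite ((1 + 1 / N) * a)).
Proof.
  intros Da Hua; apply Rbar_not_lt_le; intros HbX.
  pose proof N_ge_1.
  assert (Hinv : 0 < 1 / N <= 1)
    by (split; [apply Rdiv_lt_0_compat | apply Rle_div_l; [|rewrite Rmult_1_l]]; lra).
  set (b := (1 + 1 / N) * a) in *.
  assert (Ha : 0 < a) by (destruct Da; lra).
  assert (Hab : a <= b) by (unfold b; nra).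
  assert (Db : dom b) by (split; [lra | exact HbX]).
  assert (Hua2 : 2 * N <= u a ^ 2)
    by (pose proof (sqrt_pos (2 * N)); pose proof (sqrt_sqrt (2 * N) ltac:(lra)); nra).
  pose proof (energy_nonincreasing a b Db ltac:(lra) Hua2).
  assert (Hva : 0 < u a / p a <= a)
    by (split; [apply Rdiv_lt_0_compat; [apply sol_pos | apply sol_deriv_pos] | apply ratio_le];
        exact Da).
  assert (Hvb : 0 < u b / p b)
    by (apply Rdiv_lt_0_compat; [apply sol_pos | apply sol_deriv_pos]; exact Db).
  assert (Hb2 : 2 * a * b - N * b ^ 2 = a ^ 2 * (1 / N - N)) by (unfold b; field; lra).
  nra.
Qed.

(* u >= sigma x0 + sigma (x - x0) reaches sqrt (2 N) at x = x0 + sqrt (2 N) / sigma. *)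
Lemma dom_bounded_uniform :
  Rbar_le X (Finite ((1 + 1 / N) * (x0 + sqrt (2 * N) / sigma))).
Proof.
  pose proof N_ge_1.
  assert (Hinv : 0 < 1 / N) by (apply Rdiv_lt_0_compat; lra).
  assert (Hstep : sigma * (sqrt (2 * N) / sigma) = sqrt (2 * N)) by (field; lra).
  assert (0 <= sqrt (2 * N) / sigma) by (apply Rdiv_le_0_compat; [apply sqrt_pos | lra]).
  set (a := x0 + sqrt (2 * N) / sigma) in *.
  destruct (Rbar_lt_le_dec a X) as [HaX | HXa].
  - assert (Da : dom a) by (split; [unfold a; lra | exact HaX]).
    apply (dom_bounded a Da).
    pose proof (sol_ge_linear a Da); destruct Hsol as [_ [Hu0 _]].
    replace (a - x0) with (sqrt (2 * N) / sigma) in * by (unfold a; ring).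
    nra.
  - apply Rbar_le_trans with a; [exact HXa |]; simpl; unfold a; nra.
Qed.

End Solution.

Theorem lemma1 (n : nat) (sigma x0 : R) (X : Rbar) (u : R -> R) :
  (2 <= n)%nat -> 0 < sigma -> 0 < x0 ->
  is_max_sol n sigma x0 X u ->
  is_finite X /\
  (sqrt (2 * (INR n - 1)) <= u x0 ->
     Rbar_le X (Finite ((1 + 1 / (INR n - 1)) * x0))).
Proof.
  intros Hn Hsigma Hx0 [Hsol _].
  split.
  - pose proof (dom_bounded_uniform n sigma x0 X u Hn Hsigma Hx0 Hsol) as Hbound.
    destruct Hsol as [HX _].
    destruct X; [reflexivity | contradiction | contradiction].
  - exact (dom_bounded n sigma x0 X u Hn Hx0 Hsol x0 (dom_x0 n sigma x0 X u Hsol)).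
Qed.
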